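(* Let $\varepsilon>0$. Then $\mathfrak{ss}_e^\varepsilon=\mathfrak{ss}_l^{(-\varepsilon,\varepsilon)}$ and $(\mathfrak{ss}_e^{\varepsilon})^\perp=(\mathfrak{ss}_l^{(-\varepsilon,\varepsilon)})^\perp$.
   Context: Let $\mathfrak S_{cc}$ be the set of all sequences $\mathbf a=\langle a_i:i\in\omega\rangle$ of rational numbers with $a_i\to0$ such that $\sum_i a_i$ is conditionally convergent (converges to a real number, with the positive terms summing to $+\infty$ and the negative terms to $-\infty$). Let $[\omega]^\omega_\omega$ be the set of infinite coinfinite subsets of $\omega$; for such $X$ with increasing enumeration $\langle i_n\rangle$, $\sum_X\mathbf a$ denotes $\sum_n a_{i_n}$. For $A\subseteq\mathbb R$: $\mathfrak{ss}_l^A$ is the least cardinality of $\mathcal X\subseteq[\omega]^\omega_\omega$ such that every $\mathbf a\in\mathfrak S_{cc}$ has some $X\in\mathcal X$ for which $\sum_X\mathbf a$ converges to a limit in $A$; $(\mathfrak{ss}_l^A)^\perp$ is the least cardinality of $\mathcal A\subseteq\mathfrak S_{cc}$ such that no $X\in[\omega]^\omega_\omega$ has $\sum_X\mathbf a$ converging to a limit in $A$ for all $\mathbf a\in\mathcal A$. For $\varepsilon>0$, $\mathfrak{ss}_e^\varepsilon$ is the least cardinality of $\mathcal X\subseteq[\omega]^\omega_\omega$ such that every $\mathbf a\in\mathfrak S_{cc}$ has some $X\in\mathcal X$ for which $\sum_X\mathbf a$ converges to a limit in the open interval $(\sum\mathbf a-\varepsilon,\sum\mathbf a+\varepsilon)$;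 $(\mathfrak{ss}_e^{\varepsilon})^\perp$ is the least cardinality of $\mathcal A\subseteq\mathfrak S_{cc}$ such that no $X\in[\omega]^\omega_\omega$ has this property for all $\mathbf a\in\mathcal A$ simultaneously. *)

From HB Require Import structures.
From mathcomp Require Import all_boot all_order all_algebra.
From mathcomp Require Import all_classical all_reals all_analysis.
Set Implicit Arguments. Unset Strict Implicit. Unset Printing Implicit Defensive.
Import Order.TTheory GRing.Theory Num.Theory.
Import numFieldNormedType.Exports.
Local Open Scope classical_set_scope.
Local Open Scope ring_scope.

Definition rseq (R : realType) (a : nat -> rat) : R^nat := fun n => ratr (a n).

Definition Scc (R : realType) : set (nat -> rat) := fun a =>
  [/\ rseq R a @ \oo --> (0 : R),
      cvgn (series (rseq R a)),
      series (fun n => Num.max (rseq R a n) 0) @ \oo --> +oo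
    & series (fun n => Num.min (rseq R a n) 0) @ \oo --> -oo].

Definition sumS (R : realType) (a : nat -> rat) : R := limn (series (rseq R a)).

Definition infcoinf : set (set nat) := fun X =>
  infinite_set X /\ infinite_set (~` X).

(* These are
   the partial sums of sum_n a_{i_n} (i_n the increasing enumeration of X),
   each repeated finitely often, so they converge iff the subseries does,
   and to the same limit. *)
Definition subseries (R : realType) (X : set nat) (a : nat -> rat) : R^nat :=
  series (fun n => if `[< X n >] then rseq R a n else 0).

Definition conv_in (R : realType) (X : set nat) (a : nat -> rat) (A : set R) : Prop :=
  exists l : R, A l /\ (subseries R X a : R^nat) @ \oo --> l.

Definition ssl_family (R : realType) (A : set R) : set (set (set nat)) :=
  fun F => F `<=` infcoinf /\
    forall a, @Scc R a -> exists X, F X /\ conv_in X a A.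
Definition ssl_perp_family (R : realType) (A : set R) : set (set (nat -> rat)) :=
  fun G => G `<=` @Scc R /\
    ~ (exists X, infcoinf X /\ forall a, G a -> conv_in X a A).

Definition near_sum (R : realType) (eps : R) (a : nat -> rat) : set R :=
  fun y => sumS R a - eps < y < sumS R a + eps.
Definition sse_family (R : realType) (eps : R) : set (set (set nat)) :=
  fun F => F `<=` infcoinf /\
    forall a, @Scc R a -> exists X, F X /\ conv_in X a (near_sum eps a).
Definition sse_perp_family (R : realType) (eps : R) : set (set (nat -> rat)) :=
  fun G => G `<=` @Scc R /\
    ~ (exists X, infcoinf X /\ forall a, G a -> conv_in X a (near_sum eps a)).

(* "the least cardinality of a P-family equals the least cardinality of a
   Q-family": every P-family is dominated in cardinality by some Q-family and
   vice versa (cardinals being well-ordered, this is equality of the minima). *)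
Definition min_card_eq (T : Type) (P Q : set (set T)) : Prop :=
  (forall F, P F -> exists G, Q G /\ (G #<= F)%card) /\
  (forall G, Q G -> exists F, P F /\ (F #<= G)%card).

From HB Require Import structures.
From mathcomp Require Import all_boot all_order all_algebra.
From mathcomp Require Import all_classical all_reals all_analysis.
Import Order.TTheory GRing.Theory Num.Theory.
Set Implicit Arguments. Unset Strict Implicit. Unset Printing Implicit Defensive.
Import numFieldNormedType.Exports.
Local Open Scope classical_set_scope.
Local Open Scope ring_scope.

(* Passing from X to its complement turns a subseries sum l of a convergent
   series with sum S into S - l, and y |-> S - y maps (S - eps, S + eps) onto
   (-eps, eps) and back.  So X |-> ~` X transforms witness families for one
   cardinal into witness families of the same size for the other, and the
   dual families are literally the same. *)

Section ComplementSubseries.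
Variables (R : realType) (a : nat -> rat).
Hypothesis cvg_a : cvgn (series (rseq R a)).

Lemma subseriesC (X : set nat) :
  subseries R (~` X) a = series (rseq R a) - subseries R X a.
Proof.
apply/funext => n; apply/eqP; rewrite /= eq_sym subr_eq -big_split /=.
apply/eqP; apply: eq_bigr => k _.
by rewrite asbool_neg; case: `[< X k >] => /=; rewrite ?addr0 ?add0r.
Qed.

Lemma conv_inC (X : set nat) (A : set R) :
  conv_in X a A -> conv_in (~` X) a [set sumS R a - y | y in A].
Proof.
move=> [l [Al cvg_l]]; exists (sumS R a - l); split; first by exists l.
by rewrite subseriesC; apply: cvgB.
Qed.

End ComplementSubseries.

Lemma conv_in_sub (R : realType) (X : set nat) (a : nat -> rat) (A B : set R) :
  A `<=` B -> conv_in X a A -> conv_in X a B.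
Proof. by move=> AB [l [Al cvg_l]]; exists l; split; first exact: AB. Qed.

Lemma infcoinfC (X : set nat) : infcoinf X -> infcoinf (~` X).
Proof. by move=> [infX infCX]; split; rewrite ?setCK. Qed.

Lemma sub_near_sum_itv (R : realType) (eps : R) (a : nat -> rat) :
  [set sumS R a - y | y in near_sum eps a] `<=` `]-eps, eps[.
Proof.
move=> _ [y /andP[lty gty] <-]; rewrite /= in_itv /=; apply/andP; split.
- by rewrite ltrNl opprB ltrBlDl.
- by rewrite ltrBlDl addrC -ltrBlDl.
Qed.

Lemma sub_itv_near_sum (R : realType) (eps : R) (a : nat -> rat) :
  [set sumS R a - y | y in `]-eps, eps[] `<=` near_sum eps a.
Proof.
move=> _ [y + <-]; rewrite /= in_itv /= => /andP[lty gty].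
by rewrite /near_sum /= !ltrD2l ltrN2 gty ltrNl lty.
Qed.

(* [sse_family eps] and [ssl_family A] unfold to [subseries_family (near_sum eps)]
   and [subseries_family (fun=> A)]; likewise for the dual families. *)
Section SubseriesFamilies.
Variable R : realType.
Implicit Types (A B : (nat -> rat) -> set R) (F : set (set nat))
  (G : set (nat -> rat)).

Definition subseries_family A : set (set (set nat)) :=
  fun F => F `<=` infcoinf /\
    forall a, @Scc R a -> exists X, F X /\ conv_in X a (A a).

Definition subseries_perp_family A : set (set (nat -> rat)) :=
  fun G => G `<=` @Scc R /\
    ~ (exists X, infcoinf X /\ forall a, G a -> conv_in X a (A a)).

Definition complement_transfer A B : Prop :=
  forall X a, @Scc R a -> conv_in X a (A a) -> conv_in (~` X) a (B a).

Lemma subseries_familyC A B F : complement_transfer A B ->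
  subseries_family A F -> subseries_family B (setC @` F).
Proof.
move=> AB [Finf Fcov]; split; first by move=> _ [X FX <-]; exact/infcoinfC/Finf.
move=> a Sa; have [X [FX convX]] := Fcov a Sa.
by exists (~` X); split; [exists X | exact: AB].
Qed.

Lemma subseries_perp_familyC A B G : complement_transfer B A ->
  subseries_perp_family A G -> subseries_perp_family B G.
Proof.
move=> BA [GS noX]; split => // -[X [infX convX]]; apply: noX.
by exists (~` X); split; [exact: infcoinfC | move=> a Ga; exact/BA/convX/Ga/GS].
Qed.

Lemma min_card_eq_subseries_family A B :
  complement_transfer A B -> complement_transfer B A ->
  min_card_eq (subseries_family A) (subseries_family B).
Proof.
move=> AB BA; split=> F famF; exists (setC @` F).
- by split; [exact: subseries_familyC famF | exact: card_image_le].
- by split; [exact: subseries_familyC famF | exact: card_image_le].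
Qed.

Lemma min_card_eq_subseries_perp_family A B :
  complement_transfer A B -> complement_transfer B A ->
  min_card_eq (subseries_perp_family A) (subseries_perp_family B).
Proof.
move=> AB BA; split=> G famG; exists G; split; try exact: card_lexx.
- exact: subseries_perp_familyC famG.
- exact: subseries_perp_familyC famG.
Qed.

End SubseriesFamilies.

Lemma complement_transfer_near_sum_itv (R : realType) (eps : R) :
  complement_transfer (near_sum eps) (fun=> `]-eps, eps[%classic).
Proof.
move=> X a [_ cvg_a _ _] /(conv_inC cvg_a).
exact/conv_in_sub/sub_near_sum_itv.
Qed.

Lemma complement_transfer_itv_near_sum (R : realType) (eps : R) :
  complement_transfer (fun=> `]-eps, eps[%classic) (near_sum eps).
Proof.
move=> X a [_ cvg_a _ _] /(conv_inC cvg_a).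
exact/conv_in_sub/sub_itv_near_sum.
Qed.

Theorem mainTheorem10 (R : realType) (eps : R) (heps : 0 < eps) :
  min_card_eq (sse_family eps) (ssl_family `]-eps, eps[) /\
  min_card_eq (sse_perp_family eps) (ssl_perp_family `]-eps, eps[).
Proof.
have to_itv := @complement_transfer_near_sum_itv R eps.
have to_near_sum := @complement_transfer_itv_near_sum R eps.
split.
- exact: (min_card_eq_subseries_family to_itv to_near_sum).
- exact: (min_card_eq_subseries_perp_family to_itv to_near_sum).
Qed.
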